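(* Let $n\in\mathbb{N}$, let $W$ be a subspace of $\mathcal{T}_n$, and let $V=\mathcal{T}_n/W$. Then the matrix unit ball of $V$ is operator compact.
   Context: $\mathcal{T}_n$ denotes the trace class operators on $\mathbb{C}^n$ with the operator space structure of the dual of $M_n$, and $V=\mathcal{T}_n/W$ carries the quotient operator space structure. The matrix unit ball of an operator space $V$ is the matrix set $(B_k)_k$ with $B_k$ the closed unit ball of $M_k(V)$. $\mathcal{K}$ denotes the compact operators on $\ell^2$ and $\mathcal{K}(V)=\mathcal{K}\check{\otimes}V$ the operator-space minimal tensor product (completion of $M_\infty(V)$). $\mathcal{T}$ is the trace class on $\ell^2$ as operator space dual of $\mathcal{K}$, $M_k(\mathcal{T})\cong\mathcal{CB}(\mathcal{K},M_k)$ with norm $\|\cdot\|_{\mathcal{T}}$, $M_\infty\subseteq\mathcal{T}$, and $(\sigma\otimes\mathrm{id})(x)\in M_k(V)$ is the slice map. A matrix set $\boldsymbol{X}=(X_k)$, $X_k\subseteq M_k(V)$, is operator compact if each $X_k$ is closed and there is $x\in\mathcal{K}(V)$ with $X_k\subseteq\overline{\{(\sigma\otimes\mathrm{id})(x):\sigma\in M_k(M_\infty),\|\sigma\|_{\mathcal{T}}\le1\}}$ for all $k$. *)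

From HB Require Import structures.
From mathcomp Require Import all_boot all_order all_algebra.
From mathcomp Require Import reals.
From mathcomp Require Import complex.
Set Implicit Arguments. Unset Strict Implicit. Unset Printing Implicit Defensive.
Import Order.TTheory GRing.Theory Num.Theory.
Local Open Scope ring_scope.
Local Open Scope complex_scope.

Section OpSpace.
Variable R : realType.
Local Notation C := (R[i]).

Definition sqmod (z : C) : R := (complex.Re z) ^+ 2 + (complex.Im z) ^+ 2.

Definition vnorm2 (I : finType) (v : I -> C) : R := \sum_(i : I) sqmod (v i).

Definition opnorm_le (I J : finType) (A : I -> J -> C) (c : R) : Prop :=
  0 <= c /\ forall v : J -> C,
    vnorm2 (fun i => \sum_(j : J) A i j * v j) <= c ^+ 2 * vnorm2 v.

(* A k x k matrix x over the dual of M_N (functionals identified with N x N matrices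
   through the pairing <t, a> = \sum_{p,q} t p q * a p q) determines the
   linear map  Phi_x : M_N -> M_k,  a |-> [ <x i j, a> ]_{i,j}.
   Its m-th amplification sends A in M_m(M_N) = M_{mN} to Phi_m(A) in M_{mk}. *)
Definition blk (m N : nat) (A : 'M['M[C]_N]_m) : ('I_m * 'I_N) -> ('I_m * 'I_N) -> C :=
  fun rp sq => A rp.1 sq.1 rp.2 sq.2 .

Definition ampl (k N m : nat) (x : 'M['M[C]_N]_k) (A : 'M['M[C]_N]_m) :
    ('I_m * 'I_k) -> ('I_m * 'I_k) -> C :=
  fun ri sj => \sum_(p < N) \sum_(q < N) x ri.2 sj.2 p q * A ri.1 sj.1 p q.

(* Norm of x in M_k(dual of M_N) = M_k(T_N) is <= c, where the norm is the
   completely bounded norm of Phi_x : M_N -> M_k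
   (the operator space structure of the dual of M_N). *)
Definition dualnorm_le (k N : nat) (x : 'M['M[C]_N]_k) (c : R) : Prop :=
  forall (m : nat) (A : 'M['M[C]_N]_m) (d : R),
    opnorm_le (blk A) d -> opnorm_le (ampl x A) (c * d).

(* V = T_n / W.  Elements of M_k(V) are represented by elements of M_k(T_n).
   "quotient norm of x in M_k(T_n/W) is <= c":
   inf_{w in M_k(W)} ||x + w||_{M_k(T_n)} <= c. *)
Definition qnorm_le (n k : nat) (W : {vspace 'M[C]_n}) (x : 'M['M[C]_n]_k) (c : R)
  : Prop :=
  forall eps : R, 0 < eps ->
    exists w : 'M['M[C]_n]_k, (forall i j, w i j \in W) /\
      dualnorm_le (\matrix_(i, j) (x i j + w i j)) (c + eps).

Definition unit_ball (n : nat) (W : {vspace 'M[C]_n}) (k : nat) : 'M['M[C]_n]_k -> Prop :=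
  fun x => qnorm_le W x 1.

Definition qclosure (n k : nat) (W : {vspace 'M[C]_n}) (S : 'M['M[C]_n]_k -> Prop)
  : 'M['M[C]_n]_k -> Prop :=
  fun y => forall eps : R, 0 < eps ->
    exists s, S s /\ qnorm_le W (\matrix_(i, j) (y i j - s i j)) eps.

Definition qclosed (n k : nat) (W : {vspace 'M[C]_n}) (S : 'M['M[C]_n]_k -> Prop)
  : Prop := forall y, qclosure W S y -> S y.

(* Elements of K(V) = K \check\otimes V (completion of M_infty(V)) are given as
   infinite matrices x : nat -> nat -> T_n (representatives mod W) whose
   upper-left m x m truncations form a Cauchy sequence in M_infty(V):
   the difference between the m2- and the (zero-padded) m1-truncation is
   the matrix below. *)
Definition tail_diff (n : nat) (x : nat -> nat -> 'M[C]_n) (m1 m2 : nat)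
  : 'M['M[C]_n]_m2 :=
  \matrix_(i < m2, j < m2) (if (i < m1)%N && (j < m1)%N then 0 else x i j).

Definition in_KV (n : nat) (W : {vspace 'M[C]_n}) (x : nat -> nat -> 'M[C]_n) : Prop :=
  forall eps : R, 0 < eps -> exists M : nat, forall m1 m2 : nat,
    (M <= m1)%N -> (m1 <= m2)%N -> qnorm_le W (tail_diff x m1 m2) eps.

(* slice map (sigma \otimes id)(x) in M_k(V) for sigma in M_k(M_infty),
   sigma supported in the first N x N corner (given as a k x k matrix of
   N x N matrices), using the pairing of T with K above. *)
Definition slice (n k N : nat) (s : 'M['M[C]_N]_k) (x : nat -> nat -> 'M[C]_n)
  : 'M['M[C]_n]_k :=
  \matrix_(i, j) \sum_(p < N) \sum_(q < N) s i j p q *: x p q.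

Definition operator_compact (n : nat) (W : {vspace 'M[C]_n})
  (X : forall k : nat, 'M['M[C]_n]_k -> Prop) : Prop :=
  (forall k, qclosed W (X k)) /\
  exists x : nat -> nat -> 'M[C]_n, in_KV W x /\
    forall (k : nat) (y : 'M['M[C]_n]_k), X k y ->
      qclosure W (fun z : 'M['M[C]_n]_k =>
          exists (N : nat) (s : 'M['M[C]_N]_k), dualnorm_le s 1 /\ z = slice s x) y.

End OpSpace.

(** The quotient [V = T_n / W] is finite dimensional, so the unit ball of
    [M_k(V)] is exhausted by slices of a single finitely supported element of
    [K(V)]: the canonical element [x = sum_(p,q) e_pq (x) E_pq], for which the
    slice map is the identity, [(sigma (x) id)(x) = sigma] for every
    [sigma in M_k(M_n)].  Given [y] in the unit ball and [eps > 0], pick a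
    representative [y + w] of norm at most [1 + eps] in [M_k(T_n)]; its
    rescaling [sigma = (y + w) / (1 + eps)] has norm at most one and differs
    from [y] modulo [M_k(W)] by an element of norm at most [eps].  Closedness
    of the unit ball is the triangle inequality for the quotient norm. *)
From HB Require Import structures.
From mathcomp Require Import all_boot all_order all_algebra.
From mathcomp Require Import reals complex.
From mathcomp Require Import ring lra.
Set Implicit Arguments. Unset Strict Implicit. Unset Printing Implicit Defensive.
Import Order.TTheory GRing.Theory Num.Theory.
Local Open Scope ring_scope.
Local Open Scope complex_scope.

Section QuotientOfTraceClass.
Variable R : realType.
Local Notation C := (R[i]).

Lemma sqmod_ge0 (z : C) : 0 <= sqmod z.
Proof. by rewrite /sqmod addr_ge0 // sqr_ge0. Qed.

Lemma sqmod_eq0 (z : C) : (sqmod z == 0) = (z == 0).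
Proof.
case: z => a b; rewrite /sqmod /= paddr_eq0 ?sqr_ge0 // !sqrf_eq0.
by rewrite eq_complex.
Qed.

Lemma sqmodZ (r : R) (z : C) : sqmod (r%:C * z) = r ^+ 2 * sqmod z.
Proof. by case: z => a b; rewrite /sqmod /=; ring. Qed.

Lemma sqmodD_le (c1 c2 : R) (a b : C) : 0 <= c1 -> 0 <= c2 ->
  c1 * c2 * sqmod (a + b) <= (c1 + c2) * (c2 * sqmod a + c1 * sqmod b).
Proof.
case: a => a1 a2; case: b => b1 b2 _ _; rewrite /sqmod /= -subr_ge0.
have -> : (c1 + c2) * (c2 * (a1 ^+ 2 + a2 ^+ 2) + c1 * (b1 ^+ 2 + b2 ^+ 2)) -
    c1 * c2 * ((a1 + b1) ^+ 2 + (a2 + b2) ^+ 2) =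
    (c2 * a1 - c1 * b1) ^+ 2 + (c2 * a2 - c1 * b2) ^+ 2 by ring.
by rewrite addr_ge0 // sqr_ge0.
Qed.

Lemma vnorm2_ge0 (I : finType) (v : I -> C) : 0 <= vnorm2 v.
Proof. by apply: sumr_ge0 => i _; apply: sqmod_ge0. Qed.

Lemma vnorm2_le0 (I : finType) (v : I -> C) : vnorm2 v <= 0 -> forall i, v i = 0.
Proof.
move=> v_le0 i; apply/eqP; rewrite -sqmod_eq0.
have /eqP : vnorm2 v = 0 by apply/eqP; rewrite eq_le v_le0 vnorm2_ge0.
rewrite psumr_eq0 => [/allP/(_ i (mem_index_enum i))|j _]; last exact: sqmod_ge0.
by rewrite implyTb.
Qed.

Lemma eq_vnorm2 (I : finType) (u v : I -> C) : u =1 v -> vnorm2 u = vnorm2 v.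
Proof. by move=> uv; apply: eq_bigr => i _; rewrite uv. Qed.

Definition mulv (I J : finType) (A : I -> J -> C) (v : J -> C) : I -> C :=
  fun i => \sum_j A i j * v j.

Section OperatorNorm.
Variables I J : finType.
Implicit Types (A B : I -> J -> C) (c : R).

Lemma opnorm_ge0 A c : opnorm_le A c -> 0 <= c.
Proof. by case. Qed.

Lemma eq_opnorm_mulv A B c :
  (forall v, mulv A v =1 mulv B v) -> opnorm_le A c -> opnorm_le B c.
Proof. by move=> AB [c0 hA]; split=> // v; rewrite -(eq_vnorm2 (AB v)); apply: hA. Qed.

Lemma eq_opnorm A B c : (forall i j, A i j = B i j) -> opnorm_le A c -> opnorm_le B c.
Proof.
by move=> AB; apply: eq_opnorm_mulv => v i; apply: eq_bigr => j _; rewrite AB.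
Qed.

Lemma le_opnorm A c c' : c <= c' -> opnorm_le A c -> opnorm_le A c'.
Proof.
move=> le_cc' [c0 hA]; have c'0 := le_trans c0 le_cc'; split=> // v.
apply: le_trans (hA v) _; rewrite ler_wpM2r ?vnorm2_ge0 //.
by rewrite lerXn2r ?nnegrE.
Qed.

Lemma opnorm0 c : 0 <= c -> opnorm_le (fun (_ : I) (_ : J) => 0 : C) c.
Proof.
move=> c0; split=> // v; rewrite /vnorm2 big1 ?mulr_ge0 ?sqr_ge0 ?vnorm2_ge0 // => i _.
by rewrite big1 => [|j _]; rewrite ?mul0r // /sqmod /= expr0n /= addr0.
Qed.

Lemma opnormZ A (r c : R) :
  0 <= r -> opnorm_le A c -> opnorm_le (fun i j => r%:C * A i j) (r * c).
Proof.
move=> r0 [c0 hA]; split=> [|v]; first exact: mulr_ge0.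
have -> : vnorm2 (mulv (fun i j => r%:C * A i j) v) = r ^+ 2 * vnorm2 (mulv A v).
  rewrite /vnorm2 mulr_sumr; apply: eq_bigr => i _; rewrite -sqmodZ /mulv mulr_sumr.
  by congr sqmod; apply: eq_bigr => j _; rewrite mulrA.
by rewrite exprMn -[_ * c ^+ 2 * _]mulrA; apply: ler_wpM2l; [exact: sqr_ge0 | exact: hA].
Qed.

Lemma opnorm0_mulv A : opnorm_le A 0 -> forall v, mulv A v =1 (fun _ => 0).
Proof. by move=> [_ hA] v; apply: vnorm2_le0; rewrite (le_trans (hA v)) // expr0n mul0r. Qed.

Lemma mulvD A B v : mulv (fun i j => A i j + B i j) v =1 (fun i => mulv A v i + mulv B v i).
Proof. by move=> i; rewrite /mulv -big_split; apply: eq_bigr => j _; rewrite mulrDl. Qed.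

Lemma opnormD_gt0 A B c1 c2 : 0 < c1 -> 0 < c2 ->
  opnorm_le A c1 -> opnorm_le B c2 -> opnorm_le (fun i j => A i j + B i j) (c1 + c2).
Proof.
move=> c1_gt0 c2_gt0 [_ hA] [_ hB]; split=> [|v]; first by rewrite addr_ge0 ?ltW.
rewrite (eq_vnorm2 (mulvD A B v)) -(@ler_pM2l _ (c1 * c2)) ?mulr_gt0 //.
set a := mulv A v; set b := mulv B v.
have weighted : c1 * c2 * vnorm2 (fun i => a i + b i) <=
    (c1 + c2) * (c2 * vnorm2 a + c1 * vnorm2 b).
  rewrite /vnorm2 !mulr_sumr -big_split mulr_sumr /=; apply: ler_sum => i _.
  by apply: sqmodD_le; apply: ltW.
apply: (le_trans weighted).
have -> : c1 * c2 * ((c1 + c2) ^+ 2 * vnorm2 v) =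
    (c1 + c2) * (c2 * (c1 ^+ 2 * vnorm2 v) + c1 * (c2 ^+ 2 * vnorm2 v)) by ring.
apply: ler_wpM2l; first by rewrite addr_ge0 ?ltW.
by apply: lerD; apply: ler_wpM2l; [exact: ltW | exact: hA | exact: ltW | exact: hB].
Qed.

Lemma opnormD A B c1 c2 :
  opnorm_le A c1 -> opnorm_le B c2 -> opnorm_le (fun i j => A i j + B i j) (c1 + c2).
Proof.
move=> hA hB.
have := opnorm_ge0 hA; rewrite le_eqVlt => /predU1P [c1_0|c1_gt0].
  rewrite -c1_0 add0r in hA *; apply: eq_opnorm_mulv hB => v i.
  by rewrite mulvD (opnorm0_mulv hA v i) add0r.
have := opnorm_ge0 hB; rewrite le_eqVlt => /predU1P [c2_0|c2_gt0].
  rewrite -c2_0 addr0 in hB *; apply: eq_opnorm_mulv hA => v i.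
  by rewrite mulvD (opnorm0_mulv hB v i) addr0.
exact: opnormD_gt0.
Qed.

End OperatorNorm.

Section DualNorm.
Variables k N : nat.
Implicit Types (x y : 'M['M[C]_N]_k) (c : R).

Lemma le_dualnorm x c c' : c <= c' -> dualnorm_le x c -> dualnorm_le x c'.
Proof.
move=> le_cc' hx m A d hA; apply: le_opnorm (hx m A d hA).
by rewrite ler_wpM2r // (opnorm_ge0 hA).
Qed.

Lemma dualnorm0 c : 0 <= c -> dualnorm_le (0 : 'M['M[C]_N]_k) c.
Proof.
move=> c0 m A d hA; apply: (@eq_opnorm _ _ (fun _ _ => 0)); last first.
  by apply: opnorm0; rewrite mulr_ge0 // (opnorm_ge0 hA).
by move=> ri sj; rewrite /ampl big1 // => p _; rewrite big1 // => q _; rewrite !mxE mul0r.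
Qed.

Lemma dualnormD x y c1 c2 :
  dualnorm_le x c1 -> dualnorm_le y c2 -> dualnorm_le (x + y) (c1 + c2).
Proof.
move=> hx hy m A d hA; rewrite mulrDl.
apply: (@eq_opnorm _ _ (fun ri sj => ampl x A ri sj + ampl y A ri sj)).
  move=> ri sj; rewrite /ampl -big_split; apply: eq_bigr => p _.
  by rewrite -big_split; apply: eq_bigr => q _; rewrite !mxE mulrDl.
by apply: opnormD; [apply: hx | apply: hy].
Qed.

Lemma dualnormZ x (r c : R) :
  0 <= r -> dualnorm_le x c -> dualnorm_le (map_mx ( *:%R r%:C) x) (r * c).
Proof.
move=> r0 hx m A d hA; rewrite -mulrA.
apply: (@eq_opnorm _ _ (fun ri sj => r%:C * ampl x A ri sj)).
  move=> ri sj; rewrite /ampl mulr_sumr; apply: eq_bigr => p _.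
  by rewrite mulr_sumr; apply: eq_bigr => q _; rewrite !mxE mulrA.
by apply: opnormZ => //; apply: hx.
Qed.

End DualNorm.

Section QuotientNorm.
Variables n k : nat.
Variable W : {vspace 'M[C]_n}.
Implicit Types (x y w : 'M['M[C]_n]_k) (c : R).

Lemma matrix_add_entries x w : \matrix_(i, j) (x i j + w i j) = x + w.
Proof. by apply/matrixP => i j; rewrite !mxE. Qed.

Lemma matrix_sub_entries x w : \matrix_(i, j) (x i j - w i j) = x - w.
Proof. by apply/matrixP => i j; rewrite !mxE. Qed.

Lemma qnorm_leE x c : qnorm_le W x c <-> forall eps, 0 < eps ->
  exists w, (forall i j, w i j \in W) /\ dualnorm_le (x + w) (c + eps).
Proof.
by split=> hx eps /hx [w [wW hw]]; exists w; rewrite ?matrix_add_entries in hw *.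
Qed.

Lemma qnorm_le_dualnorm x w c :
  (forall i j, w i j \in W) -> dualnorm_le (x + w) c -> qnorm_le W x c.
Proof.
move=> wW hxw; apply/qnorm_leE => eps eps_gt0; exists w; split=> //.
by apply: le_dualnorm hxw; rewrite lerDl ltW.
Qed.

Lemma qnormD x y c1 c2 :
  qnorm_le W x c1 -> qnorm_le W y c2 -> qnorm_le W (x + y) (c1 + c2).
Proof.
move=> /qnorm_leE hx /qnorm_leE hy; apply/qnorm_leE => eps eps_gt0.
have eps2_gt0 : 0 < eps / 2 by rewrite divr_gt0.
have [wx [wxW hxw]] := hx _ eps2_gt0; have [wy [wyW hyw]] := hy _ eps2_gt0.
exists (wx + wy); split=> [i j|]; first by rewrite mxE memvD.
have -> : c1 + c2 + eps = c1 + eps / 2 + (c2 + eps / 2) by field.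
by rewrite addrACA; apply: dualnormD.
Qed.

Lemma qnorm_le_inf x c :
  (forall eps, 0 < eps -> qnorm_le W x (c + eps)) -> qnorm_le W x c.
Proof.
move=> hx; apply/qnorm_leE => eps eps_gt0.
have eps2_gt0 : 0 < eps / 2 by rewrite divr_gt0.
have /qnorm_leE/(_ _ eps2_gt0) [w [wW hxw]] := hx _ eps2_gt0.
by exists w; split=> //; rewrite (splitr eps) addrA.
Qed.

Lemma unit_ball_closed : qclosed W (@unit_ball R n W k).
Proof.
move=> y hy; apply: qnorm_le_inf => eps /hy [s [s1 hys]].
rewrite matrix_sub_entries in hys.
by rewrite -(subrK s y) addrC; apply: qnormD.
Qed.

Lemma unit_ball_approx y eps : @unit_ball R n W k y -> 0 < eps ->
  exists s, dualnorm_le s 1 /\ qnorm_le W (y - s) eps.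
Proof.
move=> /qnorm_leE hy eps_gt0; have [w [wW hyw]] := hy _ eps_gt0.
have eps1_gt0 : 0 < 1 + eps by rewrite addr_gt0.
set r := (1 + eps)^-1.
have r_ge0 : 0 <= r by rewrite invr_ge0 ltW.
have r_le1 : r <= 1 by rewrite invf_le1 // lerDl ltW.
exists (map_mx ( *:%R r%:C) (y + w)); split.
  by have := dualnormZ r_ge0 hyw; rewrite mulVf ?gt_eqF.
apply: (qnorm_le_dualnorm wW).
have : dualnorm_le (map_mx ( *:%R (1 - r)%:C) (y + w)) ((1 - r) * (1 + eps)).
  by apply: dualnormZ; rewrite ?subr_ge0.
rewrite mulrBl mul1r mulVf ?gt_eqF // addrAC subrr add0r.
congr dualnorm_le; apply/matrixP => i j; rewrite !mxE.
by apply/matrixP => p q; rewrite !mxE rmorphB /= rmorph1; ring.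
Qed.

End QuotientNorm.

Definition canonical_tensor (n : nat) : nat -> nat -> 'M[C]_n :=
  fun p q => \matrix_(a, b) ((a == p :> nat) && (b == q :> nat))%:R.

Lemma canonical_tensor_out n p q : (n <= p)%N || (n <= q)%N -> canonical_tensor n p q = 0.
Proof.
move=> pq_out; apply/matrixP => a b; rewrite !mxE.
case/orP: pq_out => [p_out|q_out].
  by rewrite (ltn_eqF (leq_trans (ltn_ord a) p_out)).
by rewrite (ltn_eqF (leq_trans (ltn_ord b) q_out)) andbF.
Qed.

Lemma tail_diff_canonical_tensor n m1 m2 :
  (n <= m1)%N -> tail_diff (canonical_tensor n) m1 m2 = 0.
Proof.
move=> n_le_m1; apply/matrixP => i j; rewrite !mxE.
case: ifP => // /negbT; rewrite negb_and -!leqNgt => ij_out.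
by apply: canonical_tensor_out; case/orP: ij_out => h; rewrite (leq_trans n_le_m1 h) ?orbT.
Qed.

Lemma canonical_tensor_in_KV n (W : {vspace 'M[C]_n}) : in_KV W (canonical_tensor n).
Proof.
move=> eps eps_gt0; exists n => m1 m2 n_le_m1 _.
rewrite tail_diff_canonical_tensor //.
apply: (qnorm_le_dualnorm (w := 0)) => [i j|]; first by rewrite mxE mem0v.
by rewrite addr0; apply: dualnorm0; rewrite ltW.
Qed.

Lemma slice_canonical_tensor n k (s : 'M['M[C]_n]_k) : slice s (canonical_tensor n) = s.
Proof.
apply/matrixP => i j; rewrite mxE [RHS](matrix_sum_delta (s i j)).
apply: eq_bigr => p _; apply: eq_bigr => q _; congr (_ *: _).
by apply/matrixP => a b; rewrite !mxE.
Qed.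

End QuotientOfTraceClass.

Theorem lemma6p1 (R : realType) (n : nat) (W : {vspace 'M[R[i]]_n}) :
  operator_compact W (fun k => @unit_ball R n W k).
Proof.
split=> [k|]; first exact: unit_ball_closed.
exists (canonical_tensor R n); split; first exact: canonical_tensor_in_KV.
move=> k y y_ball eps eps_gt0.
have [s [s_le1 y_near_s]] := unit_ball_approx y_ball eps_gt0.
exists s; split; last by rewrite matrix_sub_entries.
by exists n, s; rewrite slice_canonical_tensor.
Qed.
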